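(* Consider the no-slip billiard in a circular solid cylinder $\mathcal{B}\subset\mathbb{R}^3$ with axis vector $e$, whose moving particle is subject to a constant force directed along the axis of the cylinder. If the first collision satisfies the transversal rolling impact condition and the first flight segment does not pass through the axis of the cylinder, then the particle's trajectory is bounded.
   Context: The moving particle is a ball of radius $r>0$ with a rotationally symmetric mass distribution of total mass $m$ whose second-moment matrix per unit mass is $\lambda I$, $\lambda=(r\gamma)^2/2$, $\gamma>0$. Put $c=\frac{1-\gamma^2}{1+\gamma^2}$, $s=\frac{2\gamma}{1+\gamma^2}$, and for $a,b\in\mathbb{R}^3$ let $a\wedge b\in\mathfrak{so}(3)$ be $(a\wedge b)x=(a\cdot x)b-(b\cdot x)a$. The billiard domain $\mathcal{B}$ (the set of admissible centers) is $\{x:|x-(x\cdot e)e|\le R-r\}$ for some $R>r$; at $a\in\partial\mathcal{B}$, $\nu_a$ is the unit normal pointing into $\mathcal{B}$. A state is $(a,u,U)$ with $u$ the center-of-mass velocity and $U\in\mathfrak{so}(3)$ the angular velocity matrix (a material point at $x$ has velocity $U(x-a)+u$). Between collisions $U$ is constant and the center of mass moves with constant acceleration $F/m$, $F$ the constant force; at a collision at $a$ the pre-collision $(u,U)$ is replaced by $C_a(u,U)=\big(cu-\tfrac{s}{\gamma}(u\cdot\nu_a)\nu_a+s\gamma rU\nu_a,\ \tfrac{s}{\gamma r}\nu_a\wedge u+U-\tfrac{s}{\gamma}\nu_a\wedge U\nu_a\big)$. A pre-collision state $(a,u,U)$ satisfies the transversal rolling impact condition if the orthogonal projection of $v=u-rU\nu_a$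 onto $e^\perp\cap T_a\partial\mathcal{B}$ is zero; equivalently, with $\omega$ defined by $Ux=\omega\times x$ and $\tau_a=\nu_a\times e$, $u\cdot\tau_a+r\,\omega\cdot e=0$. *)

(* vectors in R^3 are column vectors 'cV[R]_3 over R : realType;
   angular velocity matrices are 'M[R]_3 (skew-symmetric). *)
From HB Require Import structures.
From mathcomp Require Import all_boot all_order all_algebra.
From mathcomp Require Import reals.
Set Implicit Arguments. Unset Strict Implicit. Unset Printing Implicit Defensive.
Import Order.TTheory GRing.Theory Num.Theory.
Local Open Scope ring_scope.

Section Billiard.
Variable R : realType.
Notation vec := 'cV[R]_3.
Notation mat := 'M[R]_3.

Definition dot (u v : vec) : R := (u^T *m v) ord0 ord0.
Definition vnorm (u : vec) : R := Num.sqrt (dot u u).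

Definition coord3 (u : vec) (k : nat) : R := u (inord k) ord0.
Definition cross (u v : vec) : vec :=
  \col_(i < 3)
    (if val i == 0%N then coord3 u 1 * coord3 v 2 - coord3 u 2 * coord3 v 1
     else if val i == 1%N then coord3 u 2 * coord3 v 0 - coord3 u 0 * coord3 v 2
     else coord3 u 0 * coord3 v 1 - coord3 u 1 * coord3 v 0).

(* a /\ b in so(3):  (a /\ b) x = (a . x) b - (b . x) a *)
Definition wedge (a b : vec) : mat := b *m a^T - a *m b^T.

Definition perp (e x : vec) : vec := x - dot x e *: e.

(* the billiard domain (admissible centers): |x - (x.e)e| <= Rc - r *)
Definition in_domain (e : vec) (Rc r : R) (x : vec) : Prop :=
  vnorm (perp e x) <= Rc - r.
Definition in_interior (e : vec) (Rc r : R) (x : vec) : Prop :=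
  vnorm (perp e x) < Rc - r.
Definition on_boundary (e : vec) (Rc r : R) (x : vec) : Prop :=
  vnorm (perp e x) = Rc - r.

Definition nu (e a : vec) : vec := - ((vnorm (perp e a))^-1 *: perp e a).

(* tau_a = nu_a x e, spanning e^perp /\ T_a(boundary) *)
Definition tau (e a : vec) : vec := cross (nu e a) e.

Definition cgam (g : R) : R := (1 - g ^+ 2) / (1 + g ^+ 2).
Definition sgam (g : R) : R := (2 * g) / (1 + g ^+ 2).

Definition collision (e : vec) (g r : R) (a u : vec) (U : mat) : vec * mat :=
  let n := nu e a in
  (cgam g *: u - (sgam g / g * dot u n) *: n + (sgam g * g * r) *: (U *m n),
   (sgam g / (g * r)) *: wedge n u + U - (sgam g / g) *: wedge n (U *m n)).

(* transversal rolling impact condition: the orthogonal projection of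
   v = u - r U nu_a onto the line e^perp /\ T_a(boundary) = span(tau_a)
   (tau_a a unit vector) vanishes, i.e. v . tau_a = 0 *)
Definition transversal_rolling (e : vec) (r : R) (a u : vec) (U : mat) : Prop :=
  dot (u - r *: (U *m nu e a)) (tau e a) = 0.

Definition flight (m : R) (F a u : vec) (t : R) : vec :=
  a + t *: u + (t ^+ 2 / (2 * m)) *: F.

(* An (infinite) no-slip billiard trajectory, described by its collisions:
   (a n, u n, U n) is the pre-collision state at the n-th collision,
   T n > 0 the duration of the n-th flight segment (after the n-th collision). *)
Definition noslip_trajectory (e : vec) (Rc r g m : R) (F : vec)
    (a u : nat -> vec) (U : nat -> mat) (T : nat -> R) : Prop :=
  forall n : nat,
    on_boundary e Rc r (a n) /\ 0 < T n /\
    let uU' := collision e g r (a n) (u n) (U n) in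
    (forall t, 0 < t < T n -> in_interior e Rc r (flight m F (a n) uU'.1 t)) /\
    a n.+1 = flight m F (a n) uU'.1 (T n) /\
    u n.+1 = uU'.1 + (T n / m) *: F /\
    U n.+1 = uU'.2.

End Billiard.

From HB Require Import structures.
From mathcomp Require Import all_boot all_order all_algebra.
From mathcomp Require Import reals.
From mathcomp Require Import ring lra.
Set Implicit Arguments. Unset Strict Implicit. Unset Printing Implicit Defensive.
Import Order.TTheory GRing.Theory Num.Theory.
Local Open Scope ring_scope.

(* Write n_k, t_k for the inward normal and the tangent orthogonal to the axis
   at the k-th collision point.  A no-slip collision reverses the normal
   velocity, keeps the tangential one and preserves the transversal rolling
   condition; as the force is axial, the motion orthogonal to the axis is then
   a billiard in a disc with constant speed and constant collision angle:
   every flight lasts the same time and the frame (n_k, t_k) turns by a fixed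
   rotation.  The axial data (u_k.e, r g e.U_k n_k, r g e.U_k t_k) therefore
   evolve by an affine map whose linear part, a reflection followed by a
   rotation, is orthogonal, so they stay on a sphere around its fixed point;
   and the height a_k.e differs from a conserved quantity by a linear function
   of them. *)

Lemma sqr_add1_neq0 (R : realFieldType) (x : R) : 1 + x ^+ 2 != 0.
Proof. by rewrite gt_eqF // ltr_wpDr ?sqr_ge0. Qed.

Section Vectors.
Variable R : realType.
Implicit Types (x y z n t e : 'cV[R]_3) (M : 'M[R]_3) (k : R).

Lemma dotC x y : dot x y = dot y x.
Proof. by rewrite /dot !mxE; apply: eq_bigr => i _; rewrite !mxE mulrC. Qed.

Lemma dotDl x y z : dot (x + y) z = dot x z + dot y z.
Proof. by rewrite /dot linearD mulmxDl mxE. Qed.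

Lemma dotZl k x y : dot (k *: x) y = k * dot x y.
Proof. by rewrite /dot linearZ -scalemxAl mxE. Qed.

Lemma dotNl x y : dot (- x) y = - dot x y.
Proof. by rewrite -scaleN1r dotZl mulN1r. Qed.

Lemma dotBl x y z : dot (x - y) z = dot x z - dot y z.
Proof. by rewrite dotDl dotNl. Qed.

Lemma dotDr x y z : dot z (x + y) = dot z x + dot z y.
Proof. by rewrite !(dotC z) dotDl. Qed.

Lemma dotZr k x y : dot y (k *: x) = k * dot y x.
Proof. by rewrite !(dotC y) dotZl. Qed.

Lemma dotNr x y : dot y (- x) = - dot y x.
Proof. by rewrite !(dotC y) dotNl. Qed.

Lemma dotBr x y z : dot z (x - y) = dot z x - dot z y.
Proof. by rewrite dotDr dotNr. Qed.

Lemma dot_ge0 x : 0 <= dot x x.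
Proof.
by rewrite /dot mxE; apply: sumr_ge0 => i _; rewrite mxE -expr2 sqr_ge0.
Qed.

Lemma vnorm_ge0 x : 0 <= vnorm x.
Proof. exact: sqrtr_ge0. Qed.

Lemma vnorm_sqr x : vnorm x ^+ 2 = dot x x.
Proof. exact/sqr_sqrtr/dot_ge0. Qed.

Lemma dot_mulmx x y M : dot x (M *m y) = dot (M^T *m x) y.
Proof. by rewrite /dot trmx_mul trmxK mulmxA. Qed.

Lemma dot_skewC x y M : M^T = - M -> dot x (M *m y) = - dot y (M *m x).
Proof. by move=> skM; rewrite dot_mulmx skM mulNmx dotNl dotC. Qed.

Lemma dot_skew x M : M^T = - M -> dot x (M *m x) = 0.
Proof.
move=> /(dot_skewC x x) /eqP; rewrite -addr_eq0 -mulr2n mulrn_eq0 /=.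
by move/eqP.
Qed.

Lemma dot_skew_rotate (α β : R) n t M : M^T = - M ->
  dot (α *: t - β *: n) (M *m (α *: n + β *: t)) = (α ^+ 2 + β ^+ 2) * dot t (M *m n).
Proof.
move=> skM; rewrite mulmxDr -!scalemxAr dotBl !dotDr !dotZl !dotZr.
by rewrite !dot_skew // (dot_skewC n t skM); ring.
Qed.

Lemma dot_outer x y z w : dot x (z *m y^T *m w) = dot x z * dot y w.
Proof. by rewrite /dot !mulmxA -(mulmxA (x^T *m z)) [LHS]mxE big_ord1. Qed.

Lemma dot_wedge x y z w : dot x (wedge y z *m w) = dot y w * dot x z - dot z w * dot x y.
Proof. by rewrite /wedge mulmxBl dotBr !dot_outer mulrC [dot x y * _]mulrC. Qed.

Lemma wedge_skew x y : (wedge x y)^T = - wedge x y.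
Proof. by rewrite /wedge linearB /= !trmx_mul !trmxK opprB. Qed.

End Vectors.

Section Coordinates.
Variable R : realType.
Implicit Types (x y n e : 'cV[R]_3) (k : R).

Lemma col3P x y : coord3 x 0 = coord3 y 0 -> coord3 x 1 = coord3 y 1 ->
  coord3 x 2 = coord3 y 2 -> x = y.
Proof.
move=> h0 h1 h2; apply/matrixP => i j; rewrite [j]ord1.
by rewrite -[i]inord_val; case: i => [[|[|[|i]]] Hi].
Qed.

Lemma dot3 x y : dot x y =
  coord3 x 0 * coord3 y 0 + coord3 x 1 * coord3 y 1 + coord3 x 2 * coord3 y 2.
Proof.
rewrite /dot mxE !big_ord_recl big_ord0 addr0 !mxE addrA /coord3.
by congr (_ * _ + _ * _ + _ * _); congr (_ _ _); apply/val_inj; rewrite /= inordK.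
Qed.

Lemma coord3D x y i : coord3 (x + y) i = coord3 x i + coord3 y i.
Proof. by rewrite /coord3 mxE. Qed.

Lemma coord3Z k x i : coord3 (k *: x) i = k * coord3 x i.
Proof. by rewrite /coord3 mxE. Qed.

Lemma coord3N x i : coord3 (- x) i = - coord3 x i.
Proof. by rewrite /coord3 mxE. Qed.

Lemma coord3_cross0 x y :
  coord3 (cross x y) 0 = coord3 x 1 * coord3 y 2 - coord3 x 2 * coord3 y 1.
Proof. by rewrite {1}/coord3 mxE /= inordK. Qed.

Lemma coord3_cross1 x y :
  coord3 (cross x y) 1 = coord3 x 2 * coord3 y 0 - coord3 x 0 * coord3 y 2.
Proof. by rewrite {1}/coord3 mxE /= inordK. Qed.

Lemma coord3_cross2 x y :
  coord3 (cross x y) 2 = coord3 x 0 * coord3 y 1 - coord3 x 1 * coord3 y 0.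
Proof. by rewrite {1}/coord3 mxE /= inordK. Qed.

Ltac coord3_ring := rewrite ?dot3 ?(coord3D, coord3N, coord3Z,
  coord3_cross0, coord3_cross1, coord3_cross2); ring.

Lemma dot_cross_l n e : dot (cross n e) n = 0.
Proof. coord3_ring. Qed.

Lemma dot_cross_r n e : dot (cross n e) e = 0.
Proof. coord3_ring. Qed.

Lemma dot_cross_cross n e :
  dot (cross n e) (cross n e) = dot n n * dot e e - dot n e ^+ 2.
Proof. coord3_ring. Qed.

Lemma crossDl x y e : cross (x + y) e = cross x e + cross y e.
Proof. by apply: col3P; coord3_ring. Qed.

Lemma crossZl k x e : cross (k *: x) e = k *: cross x e.
Proof. by apply: col3P; coord3_ring. Qed.

Lemma cross_cross_l n e : cross (cross n e) e = dot n e *: e - dot e e *: n.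
Proof. by apply: col3P; coord3_ring. Qed.

Lemma cross_gram x n e : dot (cross n e) (cross n e) *: x =
  (dot e e * dot x n - dot n e * dot x e) *: n
  + (dot n n * dot x e - dot n e * dot x n) *: e + dot x (cross n e) *: cross n e.
Proof. by apply: col3P; coord3_ring. Qed.
End Coordinates.

Section Frame.
Variables (R : realType) (e : 'cV[R]_3).
Hypothesis e_unit : dot e e = 1.
Implicit Types (x y w : 'cV[R]_3) (k m f s : R).

Lemma perpD x y : perp e (x + y) = perp e x + perp e y.
Proof. by rewrite /perp dotDl scalerDl opprD addrACA. Qed.

Lemma perpZ k x : perp e (k *: x) = k *: perp e x.
Proof. by rewrite /perp dotZl scalerBr scalerA. Qed.

Lemma perp_axis : perp e e = 0.
Proof. by rewrite /perp e_unit scale1r subrr. Qed.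

Lemma dot_perp_axis x : dot (perp e x) e = 0.
Proof. by rewrite /perp dotBl dotZl e_unit mulr1 subrr. Qed.

Lemma dot_perp_split x : dot x x = dot (perp e x) (perp e x) + dot x e ^+ 2.
Proof. by rewrite /perp !dotBl !dotBr !dotZl !dotZr e_unit (dotC e x); ring. Qed.

Lemma perp_flight m f x w s :
  perp e (flight m (f *: e) x w s) = perp e x + s *: perp e w.
Proof. by rewrite /flight !perpD !perpZ perp_axis !scaler0 addr0. Qed.

Lemma dot_flight_axis m f x w s :
  dot (flight m (f *: e) x w s) e = dot x e + s * dot w e + s ^+ 2 / (2 * m) * f.
Proof. by rewrite /flight !dotDl !dotZl e_unit mulr1. Qed.

Variable a : 'cV[R]_3.
Hypothesis a_off_axis : 0 < vnorm (perp e a).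
Local Notation n := (nu e a).
Local Notation t := (tau e a).

Lemma perp_nu : perp e a = - vnorm (perp e a) *: n.
Proof.
by rewrite /nu scalerN scaleNr opprK scalerA mulfV ?gt_eqF // scale1r.
Qed.

Lemma dot_nu_axis : dot n e = 0.
Proof. by rewrite /nu dotNl dotZl dot_perp_axis mulr0 oppr0. Qed.

Lemma dot_nu_nu : dot n n = 1.
Proof.
rewrite /nu dotNl dotNr opprK dotZl dotZr -vnorm_sqr mulrA -expr2 -exprMn.
by rewrite mulVf ?gt_eqF // expr1n.
Qed.

Lemma dot_tau_axis : dot t e = 0.
Proof. exact: dot_cross_r. Qed.

Lemma dot_tau_nu : dot t n = 0.
Proof. exact: dot_cross_l. Qed.

Lemma dot_tau_tau : dot t t = 1.
Proof. by rewrite dot_cross_cross dot_nu_nu e_unit dot_nu_axis expr0n subr0 mulr1. Qed.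

Lemma cross_tau_axis : cross t e = - n.
Proof. by rewrite cross_cross_l dot_nu_axis e_unit scale0r scale1r sub0r. Qed.

Lemma perp_frame x : perp e x = dot x n *: n + dot x t *: t.
Proof.
have := cross_gram x n e; rewrite -/t dot_tau_tau e_unit dot_nu_nu dot_nu_axis.
rewrite scale1r !mul1r !mul0r !subr0 /perp => {1}->.
by rewrite addrAC addrK.
Qed.

Lemma dot_frame (α β : R) :
  dot (α *: n + β *: t) (α *: n + β *: t) = α ^+ 2 + β ^+ 2.
Proof.
rewrite !dotDl !dotDr !dotZl !dotZr dot_nu_nu dot_tau_tau dot_tau_nu.
by rewrite dotC dot_tau_nu; ring.
Qed.

End Frame.

Section Chord.
Variables (R : realType) (e : 'cV[R]_3) (rho m f : R).
Hypotheses (e_unit : dot e e = 1) (rho_gt0 : 0 < rho).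
Variables a w : 'cV[R]_3.
Hypothesis a_bd : vnorm (perp e a) = rho.
Local Notation n := (nu e a).
Local Notation t := (tau e a).
Local Notation A := (dot w n).
Local Notation L := (dot w t).
Local Notation pos s := (flight m (f *: e) a w s).

Let a_off_axis : 0 < vnorm (perp e a). Proof. by rewrite a_bd. Qed.

Lemma perp_flight_frame s : perp e (pos s) = (s * A - rho) *: n + (s * L) *: t.
Proof.
rewrite perp_flight // (perp_nu a_off_axis) a_bd (perp_frame e_unit a_off_axis w).
rewrite scalerDr !scalerA scalerBl addrA; congr (_ + _).
by rewrite addrC scaleNr.
Qed.

Lemma dot_perp_flight s : dot (perp e (pos s)) (perp e (pos s)) =
  rho ^+ 2 + s * (s * (A ^+ 2 + L ^+ 2) - 2 * rho * A).
Proof. by rewrite perp_flight_frame dot_frame //; ring. Qed.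

Lemma chord_time T : 0 < T -> vnorm (perp e (pos T)) = rho ->
  T * (A ^+ 2 + L ^+ 2) = 2 * rho * A.
Proof.
move=> T_gt0 hT; have := dot_perp_flight T; rewrite -vnorm_sqr hT => h.
have /eqP : T * (T * (A ^+ 2 + L ^+ 2) - 2 * rho * A) = 0 by lra.
by rewrite mulf_eq0 gt_eqF //= subr_eq0 => /eqP.
Qed.

Lemma nu_chord T : vnorm (perp e (pos T)) = rho ->
  nu e (pos T) = (1 - T * A / rho) *: n - (T * L / rho) *: t.
Proof.
move=> hT; rewrite {1}/nu hT perp_flight_frame scalerDr !scalerA opprD -!scaleNr.
by congr (_ *: _ + _ *: _); field; rewrite gt_eqF.
Qed.

Lemma tau_chord T : vnorm (perp e (pos T)) = rho ->
  tau e (pos T) = (1 - T * A / rho) *: t + (T * L / rho) *: n.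
Proof.
move=> hT; rewrite /tau (nu_chord hT) -scaleNr crossDl !crossZl -/t.
by rewrite (cross_tau_axis e_unit a) scalerN scaleNr opprK.
Qed.

End Chord.

Section Collision.
Variables (R : realType) (e a u : 'cV[R]_3) (U : 'M[R]_3) (g r : R).
Hypotheses (g_gt0 : 0 < g) (r_gt0 : 0 < r).
Hypotheses (nu_unit : dot (nu e a) (nu e a) = 1) (nu_axis : dot (nu e a) e = 0).
Hypothesis U_skew : U^T = - U.
Hypothesis rolling : dot u (tau e a) = r * dot (tau e a) (U *m nu e a).
Local Notation n := (nu e a).
Local Notation t := (tau e a).
Local Notation c := (cgam g).
Local Notation s := (sgam g).
Local Notation v := (collision e g r a u U).1.
Local Notation W := (collision e g r a u U).2.

Let gam_neq0 : 1 + g ^+ 2 != 0. Proof. exact: sqr_add1_neq0. Qed.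
Let g_neq0 : g != 0. Proof. by rewrite gt_eqF. Qed.
Let r_neq0 : r != 0. Proof. by rewrite gt_eqF. Qed.

Let nu_tau : dot n t = 0.
Proof. by rewrite dotC dot_cross_l. Qed.

Lemma dot_collision_vel x : dot v x =
  c * dot u x - s / g * dot u n * dot n x + s * g * r * dot (U *m n) x.
Proof. by rewrite /collision /= dotDl dotBl !dotZl. Qed.

Lemma dot_collision_spin x y : dot x (W *m y) =
  s / (g * r) * (dot n y * dot x u - dot u y * dot x n) + dot x (U *m y)
  - s / g * (dot n y * dot x (U *m n) - dot (U *m n) y * dot x n).
Proof.
by rewrite /collision /= mulmxBl mulmxDl -!scalemxAl dotBr dotDr !dotZr !dot_wedge.
Qed.

Lemma collision_nu : dot v n = - dot u n.
Proof.
rewrite dot_collision_vel nu_unit (dotC (U *m n)) dot_skew // /cgam /sgam.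
by field; rewrite ?gam_neq0 ?g_neq0.
Qed.

Lemma collision_tau : dot v t = dot u t.
Proof.
rewrite dot_collision_vel nu_tau (dotC (U *m n)) rolling /cgam /sgam.
by field; rewrite ?gam_neq0 ?g_neq0.
Qed.

Lemma collision_axis : dot v e = c * dot u e + s * (r * g * dot e (U *m n)).
Proof. by rewrite dot_collision_vel nu_axis (dotC (U *m n)); ring. Qed.

Lemma collision_spin_skew : W^T = - W.
Proof.
rewrite /collision /=; set k1 := _ / (g * r); set k2 := _ / g.
rewrite linearB /= linearD /= !linearZ /= U_skew !wedge_skew.
by rewrite !scalerN !opprK !opprD opprK.
Qed.

Lemma collision_rolling : r * dot t (W *m n) = dot u t.
Proof.
rewrite dot_collision_spin nu_unit (dotC t n) nu_tau (dotC t u) rolling.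
by field; rewrite ?gam_neq0 ?g_neq0 ?r_neq0.
Qed.

Lemma collision_spin_nu_axis :
  r * g * dot e (W *m n) = s * dot u e - c * (r * g * dot e (U *m n)).
Proof.
rewrite dot_collision_spin nu_unit (dotC e n) nu_axis (dotC e u) /cgam /sgam.
by field; rewrite ?gam_neq0 ?g_neq0 ?r_neq0.
Qed.

Lemma collision_spin_tau_axis : dot e (W *m t) = dot e (U *m t).
Proof. by rewrite dot_collision_spin nu_tau (dotC e n) nu_axis; ring. Qed.

End Collision.

Section BoundedSequences.
Variable R : rcfType.
Implicit Types (x y : nat -> R) (k Q : R).

Definition bounded_seq x := exists B, forall n, `|x n| <= B.

Lemma eq_bounded_seq x y : (forall n, x n = y n) -> bounded_seq x -> bounded_seq y.
Proof. by move=> xy [B hB]; exists B => n; rewrite -xy. Qed.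

Lemma bounded_seq_cst k : bounded_seq (fun=> k).
Proof. by exists `|k|. Qed.

Lemma bounded_seqD x y :
  bounded_seq x -> bounded_seq y -> bounded_seq (fun n => x n + y n).
Proof.
move=> [Bx hx] [By hy]; exists (Bx + By) => n.
exact: le_trans (ler_normD _ _) (lerD (hx n) (hy n)).
Qed.

Lemma bounded_seqMl k x : bounded_seq x -> bounded_seq (fun n => k * x n).
Proof. by move=> [B hB]; exists (`|k| * B) => n; rewrite normrM ler_wpM2l. Qed.

Lemma bounded_seq_sqr x Q : (forall n, x n ^+ 2 <= Q) -> bounded_seq x.
Proof. by move=> hQ; exists (Num.sqrt Q) => n; rewrite -sqrtr_sqr ler_wsqrtr. Qed.

Lemma bounded_quadratic x y k (τ : R) : bounded_seq x -> bounded_seq y ->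
  exists K, forall n s, 0 <= s <= τ -> `|x n + s * y n + s ^+ 2 * k| <= K.
Proof.
move=> [Bx hx] [By hy]; exists (Bx + τ * By + τ ^+ 2 * `|k|) => n s /andP[s_ge0 s_le].
have By_ge0 : 0 <= By := le_trans (normr_ge0 _) (hy 0%N).
have hsy : s * `|y n| <= τ * By by rewrite ler_pM.
have hs2 : s ^+ 2 <= τ ^+ 2 by rewrite ler_pXn2r // nnegrE (le_trans s_ge0).
have hs2k : s ^+ 2 * `|k| <= τ ^+ 2 * `|k| by rewrite ler_wpM2r.
have := hx n; rewrite -(ger0_norm s_ge0) -normrM in hsy.
rewrite -[s ^+ 2]ger0_norm ?exprn_ge0 // -normrM in hs2k.
have := ler_normD (x n + s * y n) (s ^+ 2 * k); have := ler_normD (x n) (s * y n).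
lra.
Qed.

End BoundedSequences.

Section AxialMotion.
Variables (R : realType) (g A L τ d : R).
Hypotheses (g_gt0 : 0 < g) (A_neq0 : A != 0).
Local Notation c := (cgam g).
Local Notation s := (sgam g).
Local Notation N := (A ^+ 2 + L ^+ 2).
Local Notation C := (1 - 2 * A ^+ 2 / N).
Local Notation S := (- (2 * A * L / N)).
Variables p q k z : nat -> R.
Hypothesis p_step : forall n, p n.+1 = c * p n + s * q n + d.
Hypothesis q_step : forall n, q n.+1 = C * (s * p n - c * q n) + S * k n.
Hypothesis k_step : forall n, k n.+1 = C * k n - S * (s * p n - c * q n).
Hypothesis z_step : forall n, z n.+1 = z n + τ * (c * p n + s * q n) + τ * d / 2.

(* (d/2, -d/(2g), L d/(2gA)) is the fixed point of the affine step, and Phi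
   adds to the height the linear function of the deviation from it whose
   increment cancels the increment of the height. *)
Let yp n := p n - d / 2.
Let yq n := q n + d / (2 * g).
Let yk n := k n - L * d / (2 * g * A).
Let Phi n := z n + τ * (yq n / (2 * g) - yp n / 2 - L * yk n / (2 * g * A)).

Let gam_neq0 : 1 + g ^+ 2 != 0. Proof. exact: sqr_add1_neq0. Qed.
Let g_neq0 : g != 0. Proof. by rewrite gt_eqF. Qed.
Let N_neq0 : N != 0.
Proof. by rewrite gt_eqF // ltr_wpDr ?sqr_ge0 // lt_def sqrf_eq0 A_neq0 sqr_ge0. Qed.

Lemma deviation_sqr_const n :
  yp n ^+ 2 + yq n ^+ 2 + yk n ^+ 2 = yp 0 ^+ 2 + yq 0 ^+ 2 + yk 0 ^+ 2.
Proof.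
elim: n => // n <-; rewrite /yp /yq /yk p_step q_step k_step /cgam /sgam.
by field; rewrite ?gam_neq0 ?g_neq0 ?A_neq0 ?N_neq0.
Qed.

Lemma Phi_const n : Phi n = Phi 0.
Proof.
elim: n => // n <-; rewrite /Phi /yp /yq /yk p_step q_step k_step z_step /cgam /sgam.
by field; rewrite ?gam_neq0 ?g_neq0 ?A_neq0 ?N_neq0.
Qed.

Let bounded_deviation : [/\ bounded_seq yp, bounded_seq yq & bounded_seq yk].
Proof.
pose Q := yp 0 ^+ 2 + yq 0 ^+ 2 + yk 0 ^+ 2.
have sqr_le y0 y1 y2 : y0 ^+ 2 + y1 ^+ 2 + y2 ^+ 2 = Q ->
    [/\ y0 ^+ 2 <= Q, y1 ^+ 2 <= Q & y2 ^+ 2 <= Q].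
  by move=> <-; have := sqr_ge0 y0; have := sqr_ge0 y1; have := sqr_ge0 y2; split; lra.
by split; apply: (@bounded_seq_sqr _ _ Q) => n;
  have [] := sqr_le _ _ _ (deviation_sqr_const n).
Qed.

Lemma bounded_axial_position : bounded_seq z.
Proof.
have [byp byq byk] := bounded_deviation.
apply: (@eq_bounded_seq _ (fun n => Phi 0 + (- (τ / (2 * g))) * yq n
  + τ / 2 * yp n + τ * L / (2 * g * A) * yk n)).
  by move=> n; rewrite -(Phi_const n) /Phi; field; rewrite ?g_neq0 ?A_neq0.
move: (Phi 0) => Phi0.
by repeat apply: bounded_seqD; first [exact: bounded_seq_cst | apply: bounded_seqMl].
Qed.

Lemma bounded_axial_velocity : bounded_seq (fun n => c * p n + s * q n).
Proof.
have [byp byq _] := bounded_deviation.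
apply: (@eq_bounded_seq _ (fun n => c * yp n + s * yq n - d / 2)).
  by move=> n; rewrite /yp /yq /cgam /sgam; field; rewrite ?gam_neq0 ?g_neq0.
by repeat apply: bounded_seqD; first [exact: bounded_seq_cst | apply: bounded_seqMl].
Qed.

End AxialMotion.

Section Trajectory.
Variables (R : realType) (e : 'cV[R]_3) (Rc r g m f : R).
Variables (a u : nat -> 'cV[R]_3) (U : nat -> 'M[R]_3) (T : nat -> R).
Hypotheses (e_unit : dot e e = 1) (r_gt0 : 0 < r) (r_lt_Rc : r < Rc).
Hypotheses (g_gt0 : 0 < g) (m_gt0 : 0 < m).
Hypothesis traj : noslip_trajectory e Rc r g m (f *: e) a u U T.

Local Notation rho := (Rc - r).
Local Notation nrm k := (nu e (a k)).
Local Notation tng k := (tau e (a k)).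
Local Notation vel k := (collision e g r (a k) (u k) (U k)).1.
Local Notation spin k := (collision e g r (a k) (u k) (U k)).2.
Local Notation pos k s := (flight m (f *: e) (a k) (vel k) s).

Let rho_gt0 : 0 < rho. Proof. by rewrite subr_gt0. Qed.
Let m_neq0 : m != 0. Proof. by rewrite gt_eqF. Qed.

Let step k : vnorm (perp e (a k)) = rho /\ 0 < T k /\
  (forall s, 0 < s < T k -> in_interior e Rc r (pos k s)) /\
  a k.+1 = pos k (T k) /\ u k.+1 = vel k + (T k / m) *: (f *: e) /\ U k.+1 = spin k.
Proof. exact: traj k. Qed.

Let on_boundary k : vnorm (perp e (a k)) = rho. Proof. by case: (step k). Qed.
Let T_gt0 k : 0 < T k. Proof. by case: (step k) => _ []. Qed.
Let in_flight k : forall s, 0 < s < T k -> in_interior e Rc r (pos k s).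
Proof. by case: (step k) => _ [_ []]. Qed.
Let a_next k : a k.+1 = pos k (T k). Proof. by case: (step k) => _ [_ [_ []]]. Qed.
Let u_next k : u k.+1 = vel k + (T k / m) *: (f *: e).
Proof. by case: (step k) => _ [_ [_ [_ []]]]. Qed.
Let U_next k : U k.+1 = spin k. Proof. by case: (step k) => _ [_ [_ [_ []]]]. Qed.

Let nrm_unit k : dot (nrm k) (nrm k) = 1.
Proof. by apply: dot_nu_nu; rewrite on_boundary. Qed.
Let nrm_axis k : dot (nrm k) e = 0. Proof. exact: dot_nu_axis. Qed.

(* Locked, so that unification never unfolds the collision map inside them. *)
Definition normal_speed := locked (dot (vel 0) (nrm 0)).
Definition tangent_speed := locked (dot (vel 0) (tng 0)).
Local Notation A0 := normal_speed.
Local Notation L0 := tangent_speed.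
Let A0E : dot (vel 0) (nrm 0) = A0. Proof. by rewrite /normal_speed -lock. Qed.
Let L0E : dot (vel 0) (tng 0) = L0. Proof. by rewrite /tangent_speed -lock. Qed.
Local Notation N0 := (A0 ^+ 2 + L0 ^+ 2).
Local Notation Tc := (2 * rho * A0 / N0).
Local Notation C := (1 - 2 * A0 ^+ 2 / N0).
Local Notation S := (- (2 * A0 * L0 / N0)).

Definition rolling_state k := [/\ (U k)^T = - U k,
  dot (u k) (tng k) = r * dot (tng k) (U k *m nrm k),
  dot (u k) (nrm k) = - A0 & dot (u k) (tng k) = L0].

Lemma rolling_state0 : (U 0%N)^T = - U 0%N ->
  transversal_rolling e r (a 0%N) (u 0%N) (U 0%N) -> rolling_state 0.
Proof.
move=> U0_skew rolling0.
have roll : dot (u 0%N) (tng 0) = r * dot (tng 0) (U 0%N *m nrm 0).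
  move: rolling0; rewrite /transversal_rolling dotBl dotZl (dotC (_ *m _)).
  by move=> /eqP; rewrite subr_eq0 => /eqP.
split=> //; last by rewrite -L0E collision_tau.
by rewrite -A0E collision_nu // opprK.
Qed.

Lemma N0_gt0 : 0 < N0.
Proof.
rewrite lt_def addr_ge0 ?sqr_ge0 // andbT; apply/negP => /eqP N0_eq0.
have A0_eq0 : A0 = 0.
  apply/eqP; rewrite -sqrf_eq0; apply/eqP.
  by have := sqr_ge0 A0; have := sqr_ge0 L0; lra.
have hs : 0 < T 0%N / 2 < T 0%N by have := T_gt0 0 => T0_gt0; apply/andP; split; lra.
have := in_flight hs; rewrite /in_interior => hlt.
have hsq : vnorm (perp e (pos 0%N (T 0%N / 2))) ^+ 2 = rho ^+ 2.
  rewrite vnorm_sqr (dot_perp_flight m f e_unit rho_gt0 _ (on_boundary 0)).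
  by rewrite A0E L0E N0_eq0 A0_eq0; ring.
by have := vnorm_ge0 (perp e (pos 0%N (T 0%N / 2))); nra.
Qed.

Let N0_neq0 : N0 != 0. Proof. by rewrite gt_eqF // N0_gt0. Qed.

Local Notation axial_speed k := (dot (u k) e).
Local Notation spin_nrm k := (r * g * dot e (U k *m nrm k)).
Local Notation spin_tng k := (r * g * dot e (U k *m tng k)).
Local Notation height k := (dot (a k) e).
Local Notation d := (Tc * f / m).

Lemma height_pos k s : dot (pos k s) e = height k
  + s * (cgam g * axial_speed k + sgam g * spin_nrm k) + s ^+ 2 * (f / (2 * m)).
Proof. by rewrite (dot_flight_axis e_unit) (collision_axis _ _ _ _ (nrm_axis k)); ring. Qed.

Section Step.
Variable k : nat.
Hypothesis state : rolling_state k.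

Let U_skew : (U k)^T = - U k. Proof. by case: state. Qed.
Let rolling : dot (u k) (tng k) = r * dot (tng k) (U k *m nrm k).
Proof. by case: state. Qed.

Let u_nrm : dot (u k) (nrm k) = - A0. Proof. by have [_ _ -> _] := state. Qed.
Let u_tng : dot (u k) (tng k) = L0. Proof. by have [_ _ _ ->] := state. Qed.

Lemma vel_nrm : dot (vel k) (nrm k) = A0.
Proof. by rewrite (collision_nu _ _ g_gt0 (nrm_unit k) U_skew) u_nrm opprK. Qed.

Lemma vel_tng : dot (vel k) (tng k) = L0.
Proof. by rewrite (collision_tau g_gt0 rolling) u_tng. Qed.

Lemma flight_time : T k = Tc.
Proof.
have := chord_time (m := m) (f := f) e_unit rho_gt0 (w := vel k)
  (on_boundary k) (T_gt0 k).
rewrite vel_nrm vel_tng -a_next => /(_ (on_boundary k.+1)) <-.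
by field.
Qed.

Let on_boundary_next : vnorm (perp e (pos k Tc)) = rho.
Proof. by rewrite -flight_time -a_next on_boundary. Qed.

Lemma nrm_next : nrm k.+1 = C *: nrm k + S *: tng k.
Proof.
rewrite a_next flight_time (nu_chord e_unit rho_gt0 (on_boundary k) on_boundary_next).
rewrite vel_nrm vel_tng -scaleNr; congr (_ *: _ + _ *: _).
  by field; rewrite N0_neq0 gt_eqF.
by field; rewrite N0_neq0 gt_eqF.
Qed.

Lemma tng_next : tng k.+1 = C *: tng k - S *: nrm k.
Proof.
rewrite a_next flight_time (tau_chord e_unit rho_gt0 (on_boundary k) on_boundary_next).
rewrite vel_nrm vel_tng -scaleNr; congr (_ *: _ + _ *: _).
  by field; rewrite N0_neq0 gt_eqF.
by field; rewrite N0_neq0 gt_eqF.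
Qed.

Let dot_u_next x : dot x e = 0 -> dot (u k.+1) x = dot (vel k) x.
Proof. by move=> xe; rewrite u_next dotDl !dotZl (dotC e) xe !mulr0 addr0. Qed.

Lemma rolling_state_next : rolling_state k.+1.
Proof.
have W_skew := collision_spin_skew e (a k) (u k) g r U_skew.
have ut : dot (u k.+1) (tng k.+1) = L0.
  rewrite dot_u_next; last exact: dot_tau_axis.
  rewrite tng_next dotBr !dotZr vel_nrm vel_tng.
  by field; rewrite N0_neq0.
split; last exact: ut.
- by rewrite U_next; exact: W_skew.
- rewrite ut U_next nrm_next tng_next (dot_skew_rotate _ _ _ _ W_skew).
  have -> : C ^+ 2 + S ^+ 2 = 1 by field; rewrite N0_neq0.
  by rewrite mul1r (collision_rolling g_gt0 r_gt0 (nrm_unit k) rolling) u_tng.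
- rewrite dot_u_next; last exact: nrm_axis.
  rewrite nrm_next dotDr !dotZr vel_nrm vel_tng.
  by field; rewrite N0_neq0.
Qed.

Lemma axial_speed_next :
  axial_speed k.+1 = cgam g * axial_speed k + sgam g * spin_nrm k + d.
Proof.
rewrite u_next dotDl !dotZl e_unit (collision_axis _ _ _ _ (nrm_axis k)) flight_time.
by rewrite mulr1 [Tc / m * f]mulrAC.
Qed.

Lemma spin_nrm_next : spin_nrm k.+1 =
  C * (sgam g * axial_speed k - cgam g * spin_nrm k) + S * spin_tng k.
Proof.
rewrite U_next nrm_next mulmxDr -!scalemxAr dotDr !dotZr.
rewrite -(collision_spin_nu_axis _ _ g_gt0 r_gt0 (nrm_unit k) (nrm_axis k)).
by rewrite -(collision_spin_tau_axis (u k) (U k) g r (nrm_axis k)); ring.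
Qed.

Lemma spin_tng_next : spin_tng k.+1 =
  C * spin_tng k - S * (sgam g * axial_speed k - cgam g * spin_nrm k).
Proof.
rewrite U_next tng_next mulmxBr -!scalemxAr dotBr !dotZr.
rewrite -(collision_spin_nu_axis _ _ g_gt0 r_gt0 (nrm_unit k) (nrm_axis k)).
by rewrite -(collision_spin_tau_axis (u k) (U k) g r (nrm_axis k)); ring.
Qed.

Lemma height_next : height k.+1 =
  height k + Tc * (cgam g * axial_speed k + sgam g * spin_nrm k) + Tc * d / 2.
Proof.
rewrite a_next (dot_flight_axis e_unit) (collision_axis _ _ _ _ (nrm_axis k)).
by rewrite flight_time; field; rewrite m_neq0.
Qed.

Lemma perp_pos_sqr_le s : 0 <= s <= T k ->
  dot (perp e (pos k s)) (perp e (pos k s)) <= rho ^+ 2.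
Proof.
move=> /andP[s_ge0 s_le].
rewrite (dot_perp_flight m f e_unit rho_gt0 _ (on_boundary k)) vel_nrm vel_tng.
have -> : 2 * rho * A0 = T k * N0 by rewrite flight_time; field.
rewrite gerDl -mulrBl mulr_ge0_le0 // mulr_le0_ge0 ?subr_le0 //.
exact: ltW N0_gt0.
Qed.

End Step.

Theorem trajectory_bounded : (U 0%N)^T = - U 0%N ->
  transversal_rolling e r (a 0%N) (u 0%N) (U 0%N) ->
  exists M, forall k s, 0 <= s <= T k -> vnorm (pos k s) <= M.
Proof.
move=> U0_skew rolling0.
have state k : rolling_state k.
  by elim: k => [|k /rolling_state_next //]; exact: rolling_state0.
have A0_gt0 : 0 < A0.
  have := T_gt0 0; rewrite (flight_time (state 0)) pmulr_lgt0 ?invr_gt0 ?N0_gt0 //.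
  by rewrite pmulr_rgt0 // mulr_gt0.
have [K hK] := bounded_quadratic (f / (2 * m)) Tc
  (bounded_axial_position g_gt0 (lt0r_neq0 A0_gt0)
     (fun k => axial_speed_next (state k)) (fun k => spin_nrm_next (state k))
     (fun k => spin_tng_next (state k)) (fun k => height_next (state k)))
  (bounded_axial_velocity g_gt0 (lt0r_neq0 A0_gt0)
     (fun k => axial_speed_next (state k)) (fun k => spin_nrm_next (state k))
     (fun k => spin_tng_next (state k))).
exists (Num.sqrt (rho ^+ 2 + K ^+ 2)) => k s hs.
rewrite ler_wsqrtr // (dot_perp_split e_unit) lerD ?(perp_pos_sqr_le (state k) hs) //.
rewrite height_pos; rewrite (flight_time (state k)) in hs.
move: (hK k s hs); set x := _ + _ + _ => hx.
by rewrite -real_normK ?num_real //; have := normr_ge0 x; nra.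
Qed.

End Trajectory.

Theorem theorem2p12 (R : realType) (e : 'cV[R]_3) (Rc r g m f : R)
    (a u : nat -> 'cV[R]_3) (U : nat -> 'M[R]_3) (T : nat -> R) :
  dot e e = 1 -> 0 < r -> r < Rc -> 0 < g -> 0 < m ->
  (U 0%N)^T = - U 0%N ->
  noslip_trajectory e Rc r g m (f *: e) a u U T ->
  transversal_rolling e r (a 0%N) (u 0%N) (U 0%N) ->
  ~ (exists t, 0 <= t <= T 0%N /\
       perp e (flight m (f *: e) (a 0%N)
                 (collision e g r (a 0%N) (u 0%N) (U 0%N)).1 t) = 0) ->
  exists M : R, forall (n : nat) (t : R), 0 <= t <= T n ->
    vnorm (flight m (f *: e) (a n)
             (collision e g r (a n) (u n) (U n)).1 t) <= M.
Proof.
move=> e_unit r_gt0 r_lt_Rc g_gt0 m_gt0 U0_skew traj rolling0 _.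
exact: (trajectory_bounded e_unit r_gt0 r_lt_Rc g_gt0 m_gt0 traj U0_skew rolling0).
Qed.
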